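(* There is a metric on $\mathcal{I}_\alpha$ that generates the same topology as $d_\alpha$, and with respect to which $\mathcal{I}_\alpha$ is isometric to a subset of a compact metric space.
   Context: Fix $\alpha\in(0,1)$. An interval partition is a set $\beta$ of disjoint open subintervals (blocks) of some interval $[0,L]$ that cover $[0,L]$ up to a Lebesgue-null set; write $\|\beta\|:=L$ and $\mathrm{Leb}(U)$ for the length of a block $U$. $\beta$ has the $\alpha$-diversity property if for every $t\in[0,\|\beta\|]$ the limit $\mathscr{D}_\beta(t):=\Gamma(1-\alpha)\lim_{h\downarrow0}h^\alpha\#\{(a,b)\in\beta\colon b-a>h,\ b\le t\}$ exists; $\mathcal{I}_\alpha$ is the set of such partitions. For $U\in\beta$, $\mathscr{D}_\beta(U):=\mathscr{D}_\beta(t)$ for $t\in U$; $\mathscr{D}_\beta(\infty):=\mathscr{D}_\beta(\|\beta\|)$. A correspondence between $\beta,\gamma\in\mathcal{I}_\alpha$ is a finite sequence $(U_j,V_j)_{j\in[n]}$, $n\ge0$, of pairs in $\beta\times\gamma$ with $(U_j)_j$ and $(V_j)_j$ each strictly increasing in left-to-right order. Its $\alpha$-distortion is the maximum of $\sum_{j}|\mathrm{Leb}(U_j)-\mathrm{Leb}(V_j)|+\|\beta\|-\sum_j\mathrm{Leb}(U_j)$, $\sum_{j}|\mathrm{Leb}(U_j)-\mathrm{Leb}(V_j)|+\|\gamma\|-\sum_j\mathrm{Leb}(V_j)$, $\sup_j|\mathscr{D}_\beta(U_j)-\mathscr{D}_\gamma(V_j)|$ and $|\mathscr{D}_\beta(\infty)-\mathscr{D}_\gamma(\infty)|$.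 $d_\alpha(\beta,\gamma)$ is the infimum of the $\alpha$-distortion over all correspondences. *)

From HB Require Import structures.
From mathcomp Require Import all_boot all_order all_algebra.
From mathcomp Require Import all_classical all_reals all_analysis.
Set Implicit Arguments. Unset Strict Implicit. Unset Printing Implicit Defensive.
Import Order.TTheory GRing.Theory Num.Theory.
Import numFieldNormedType.Exports.
Local Open Scope classical_set_scope.
Local Open Scope ring_scope.

Definition Gammaf {R : realType} (s : R) : R :=
  fine (\int[@lebesgue_measure R]_(x in `]0%R, +oo[) ((x `^ (s - 1)) * expR (- x))%:E)%E.

Definition block_set {R : realType} (U : R * R) : set R := `]U.1, U.2[.

Definition is_interval_partition {R : realType} (B : set (R * R)) (L : R) : Prop :=
  0 <= L /\
  (forall U, B U -> 0 <= U.1 /\ U.1 < U.2 /\ U.2 <= L) /\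
  (forall U V, B U -> B V -> U <> V -> block_set U `&` block_set V = set0) /\
  (@lebesgue_measure R).-negligible (`[0%R, L] `\` \bigcup_(U in B) block_set U).

Definition nblocks {R : realType} (B : set (R * R)) (t h : R) : R :=
  (\sum_(U \in [set U | B U /\ h < U.2 - U.1 /\ U.2 <= t]) (1 : R))%R.

Definition diversity_fun {R : realType} (alpha : R) (B : set (R * R)) (t : R) : R -> R :=
  fun h => Gammaf (1 - alpha) * (h `^ alpha) * nblocks B t h.

Definition has_diversity {R : realType} (alpha : R) (B : set (R * R)) (L : R) : Prop :=
  forall t, 0 <= t <= L -> cvg (diversity_fun alpha B t @ 0^'+).

Definition is_Ialpha {R : realType} (alpha : R) (p : set (R * R) * R) : Prop :=
  is_interval_partition p.1 p.2 /\ has_diversity alpha p.1 p.2.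

(* the space I_alpha; an element is a pair (set of blocks, total length ||beta||) *)
Definition Ialpha {R : realType} (alpha : R) := {p : set (R * R) * R | is_Ialpha alpha p}.

Definition blocks {R : realType} {alpha : R} (b : Ialpha alpha) : set (R * R) := (proj1_sig b).1.
Definition IPlen {R : realType} {alpha : R} (b : Ialpha alpha) : R := (proj1_sig b).2.

Definition Div {R : realType} {alpha : R} (b : Ialpha alpha) (t : R) : R :=
  lim (diversity_fun alpha (blocks b) t @ 0^'+).

(* D_beta(U) := D_beta(t) for t in U; we take t = midpoint of U *)
Definition DivU {R : realType} {alpha : R} (b : Ialpha alpha) (U : R * R) : R :=
  Div b ((U.1 + U.2) / 2).

Definition Divinf {R : realType} {alpha : R} (b : Ialpha alpha) : R := Div b (IPlen b).

Definition Leb {R : realType} (U : R * R) : R := U.2 - U.1.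

Definition block_lt {R : realType} (U V : R * R) : bool := U.2 <= V.1.

Definition is_correspondence {R : realType} {alpha : R} (b g : Ialpha alpha)
    (s : seq ((R * R) * (R * R))) : Prop :=
  (forall p, p \in s -> blocks b p.1 /\ blocks g p.2) /\
  sorted block_lt (map fst s) /\ sorted block_lt (map snd s).

Definition distortion {R : realType} {alpha : R} (b g : Ialpha alpha)
    (s : seq ((R * R) * (R * R))) : R :=
  let S := \sum_(p <- s) `|Leb p.1 - Leb p.2| in
  Num.max (Num.max (S + IPlen b - \sum_(p <- s) Leb p.1)
                   (S + IPlen g - \sum_(p <- s) Leb p.2))
          (Num.max (\big[Num.max/0]_(p <- s) `|DivU b p.1 - DivU g p.2|)
                   `|Divinf b - Divinf g|).

Definition d_alpha {R : realType} {alpha : R} (b g : Ialpha alpha) : R :=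
  inf [set x | exists s, is_correspondence b g s /\ x = distortion b g s].

Definition is_metric {R : realType} {T : Type} (d : T -> T -> R) : Prop :=
  (forall x y, 0 <= d x y) /\ (forall x y, d x y = 0 <-> x = y) /\
  (forall x y, d x y = d y x) /\ (forall x y z, d x z <= d x y + d y z).

Definition d_open {R : realType} {T : Type} (d : T -> T -> R) (U : set T) : Prop :=
  forall x, U x -> exists e : R, 0 < e /\ forall y, d x y < e -> U y.

Definition d_compact {R : realType} {T : Type} (d : T -> T -> R) : Prop :=
  forall (I : Type) (F : I -> set T), (forall i, d_open d (F i)) ->
    (forall x, exists i, F i x) ->
    exists (n : nat) (g : 'I_n -> I), forall x, exists k, F (g k) x.

From HB Require Import structures.
From mathcomp Require Import all_boot all_order all_algebra.
From mathcomp Require Import all_classical all_reals all_analysis.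
From mathcomp Require Import lra.
Import Order.TTheory GRing.Theory Num.Theory.
Set Implicit Arguments. Unset Strict Implicit. Unset Printing Implicit Defensive.
Local Open Scope classical_set_scope.
Local Open Scope ring_scope.

(* The distance d_alpha is a metric.  It is symmetric since correspondences can be
   reversed, and it satisfies the triangle inequality since correspondences compose:
   a pair whose middle block is left unmatched costs only length already charged to
   the defects of the two correspondences.  It separates points since a correspondence
   of distortion e < Leb U must pair the block U with a block whose left end and length
   are e-close to those of U.
   It is also separable: all but eps of the length of a partition sits in finitely many
   blocks, and rounding their lengths and diversities to a grid yields countably many
   classes of d_alpha-diameter at most 2 eps.
   A separable metric space (T, d) with dense sequence (z_n) embeds homeomorphically into
   the Hilbert cube [0,1]^nat, metrized by rho(a, b) = sup_n min(|a_n - b_n|, 1/(n+1)),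
   via x |-> (min(d(x, z_n), 1))_n; the pulled-back metric is the required d', and the
   cube is compact by Tychonoff's theorem.  The value of alpha plays no role. *)

Lemma natSinv_gt0 (R : numFieldType) (n : nat) : (0 : R) < n.+1%:R^-1.
Proof. by rewrite invr_gt0 ltr0Sn. Qed.

Lemma natSinv_lt_exists (R : realType) (x : R) : 0 < x ->
  exists k : nat, k.+1%:R^-1 < x.
Proof.
by move=> x_gt0; have [N _ /(_ N (leqnn N))] := near_infty_natSinv_lt (PosNum x_gt0); exists N.
Qed.

Lemma minr_subadd (R : realDomainType) (w x y z : R) : 0 <= w -> 0 <= y -> 0 <= z ->
  x <= y + z -> Num.min x w <= Num.min y w + Num.min z w.
Proof.
move=> w_ge0 y_ge0 z_ge0 xyz.
have x1 : Num.min x w <= x by rewrite ge_min lexx.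
have x2 : Num.min x w <= w by rewrite ge_min lexx orbT.
by have [yw|wy] := lerP y w; have [zw|wz] := lerP z w; lra.
Qed.

Lemma dist_minr_le (R : realDomainType) (a b c : R) :
  `|Num.min a c - Num.min b c| <= `|a - b|.
Proof.
have := ler_norm (a - b); have := ler_norm (b - a); rewrite (distrC b) => ba ab.
by rewrite ler_norml; have [ac|ca] := lerP a c; have [bc|cb] := lerP b c;
  apply/andP; split; lra.
Qed.

Lemma eq_dist_lt (R : realFieldType) (x y c : R) : 0 < c ->
  (forall e, 0 < e -> e <= c -> `|x - y| < e) -> x = y.
Proof.
move=> c_gt0 small; apply/eqP; rewrite -subr_eq0 -normr_le0.
apply/ler_addgt0Pr => e e_gt0; rewrite add0r.
apply/ltW/(lt_le_trans (small (Num.min e c) _ _)); rewrite ?ge_min ?lexx ?orbT //.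
by rewrite lt_min e_gt0.
Qed.

Lemma floor_eq_dist_lt (R : realType) (x y c : R) : 0 < c ->
  Num.floor (x * c) = Num.floor (y * c) -> `|x - y| < c^-1.
Proof.
move=> c_gt0 xy; rewrite -(ltr_pM2r c_gt0) mulVf ?gt_eqF //.
rewrite -[c in _ * c]gtr0_norm // -normrM mulrBl.
have := floor_itv (x * c); have := floor_itv (y * c); rewrite xy intrD.
by move=> /andP[? ?] /andP[? ?]; rewrite ltr_norml; apply/andP; split; lra.
Qed.

Lemma ler_sum_subset (R : numDomainType) (I : eqType) (l s : seq I) (F : I -> R) :
  uniq l -> uniq s -> {subset l <= s} -> (forall i, 0 <= F i) ->
  \sum_(i <- l) F i <= \sum_(i <- s) F i.
Proof.
move=> l_uniq s_uniq ls F_ge0; rewrite [X in _ <= X](bigID (mem l)) /=.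
have -> : \sum_(i <- s | i \in l) F i = \sum_(i <- l) F i.
  rewrite -big_filter; apply: perm_big; apply: uniq_perm => [||i]; rewrite ?filter_uniq //.
  by rewrite mem_filter andb_idr //; exact: ls.
by rewrite lerDl sumr_ge0.
Qed.

(** * The Hilbert cube *)

Section HilbertCube.
Variable R : realType.
Implicit Types (a b c : nat -> R).

Definition hilbert_cube := {a : nat -> R | forall n, 0 <= a n <= 1}.

Definition cube_term a b n : R := Num.min `|a n - b n| n.+1%:R^-1.
Definition cube_dist a b : R := sup (range (cube_term a b)).
Definition cube_metric (x y : hilbert_cube) : R := cube_dist (sval x) (sval y).

Lemma cube_term_ge0 a b n : 0 <= cube_term a b n.
Proof. by rewrite le_min normr_ge0 ltW ?natSinv_gt0. Qed.

Lemma cube_term_le_weight a b n : cube_term a b n <= n.+1%:R^-1.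
Proof. by rewrite ge_min lexx orbT. Qed.

Lemma has_sup_cube_term a b : has_sup (range (cube_term a b)).
Proof.
split; first by exists (cube_term a b 0), 0%N.
exists 1 => _ [n _ <-]; apply: le_trans (cube_term_le_weight a b n) _.
by rewrite invf_le1 ?ltr0Sn // ler1n.
Qed.

Lemma cube_term_le_dist a b n : cube_term a b n <= cube_dist a b.
Proof. by apply: sup_upper_bound; [exact: has_sup_cube_term|exists n]. Qed.

Lemma cube_dist_le a b e : (forall n, cube_term a b n <= e) -> cube_dist a b <= e.
Proof. by move=> le_e; apply: ge_sup; [exists (cube_term a b 0), 0%N|move=> _ [n _ <-]]. Qed.

Lemma cube_dist_le_cylinder a b (N : nat) e : N.+1%:R^-1 <= e ->
  (forall n, (n < N)%N -> `|a n - b n| <= e) -> cube_dist a b <= e.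
Proof.
move=> wN_le close; apply: cube_dist_le => n; case: (ltnP n N) => [/close|Nn].
  by apply: le_trans; rewrite ge_min lexx.
apply: le_trans (cube_term_le_weight a b n) (le_trans _ wN_le).
by rewrite lef_pV2 ?posrE ?ltr0Sn // ler_nat ltnS.
Qed.

Lemma cube_metric_is_metric : is_metric cube_metric.
Proof.
split; first by move=> x y; apply: le_trans (cube_term_le_dist _ _ 0); exact: cube_term_ge0.
split.
  move=> [a a01] [b b01]; rewrite /cube_metric /=; split => [ab0|[<-]]; last first.
    apply/le_anti; rewrite (le_trans (cube_term_ge0 a a 0) (cube_term_le_dist a a 0)) andbT.
    by apply: cube_dist_le => n; rewrite /cube_term subrr normr0 ge_min lexx.
  suff ab : a = b by exact: eq_exist.
  apply/funext => n; have := cube_term_le_dist a b n; rewrite ab0 ge_min.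
  case/orP => [|]; first by rewrite normr_le0 subr_eq0 => /eqP.
  by rewrite leNgt natSinv_gt0.
split.
  move=> x y; rewrite /cube_metric /cube_dist; congr sup; apply/seteqP.
  by split => _ [n _ <-]; exists n => //; rewrite /cube_term distrC.
move=> [a ?] [b ?] [c ?]; rewrite /cube_metric /=; apply: cube_dist_le => n.
apply: le_trans (lerD (cube_term_le_dist a b n) (cube_term_le_dist b c n)).
apply: minr_subadd; [exact/ltW/natSinv_gt0|exact: normr_ge0|exact: normr_ge0|].
exact: ler_distD.
Qed.

End HilbertCube.

(* The product topology on sequences, with a point so that compactness can be read as
   the open-cover property ([compact_cover]). *)
Definition real_seq_ptws (R : realType) : Type := {ptws nat -> R^o}.
HB.instance Definition _ (R : realType) :=
  Topological.copy (real_seq_ptws R) {ptws nat -> R^o}.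
HB.instance Definition _ (R : realType) :=
  isPointed.Build (real_seq_ptws R) (fun _ => 0 : R).

Section HilbertCubeCompact.
Variable R : realType.

Definition cylinder (x : nat -> R) (N : nat) (e : R) : set (real_seq_ptws R) :=
  [set f | forall n, (n < N)%N -> `|f n - x n| < e].

Lemma cylinder_open x N e : open (cylinder x N e).
Proof.
elim: N => [|N IHN].
  by rewrite (_ : cylinder x 0 e = setT); [exact: openT|apply/seteqP; split].
have -> : cylinder x N.+1 e = cylinder x N e `&` proj N @^-1` ball (x N : R^o) e.
  apply/seteqP; split => f.
    move=> fx; split; first by move=> n nN; apply: fx; rewrite ltnS ltnW.
    by rewrite /= /ball /= distrC; apply: fx.
  move=> [fx fxN] n; rewrite ltnS leq_eqVlt => /orP[/eqP->|]; last exact: fx.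
  by move: fxN; rewrite /= /ball /= distrC.
apply: openI IHN _; apply: open_comp; last exact: ball_open.
by move=> f _; exact: proj_continuous.
Qed.

Lemma hilbert_cube_compact : d_compact (@cube_metric R).
Proof.
move=> I F F_open F_cover.
pose cube : set (real_seq_ptws R) := [set f | forall n, `[0, 1]%classic (f n)].
have cube_compact : cover_compact cube.
  rewrite -compact_cover; exact: (tychonoff (fun=> @segment_compact R 0 1)).
pose good (i : I) (t : hilbert_cube R * (nat * R)) := 0 < t.2.2 /\ forall y,
  (forall n, (n < t.2.1)%N -> `|sval y n - sval t.1 n| < t.2.2) -> F i y.
pose G (i : {classic I}) := \bigcup_(t in good i) cylinder (sval t.1) t.2.1 t.2.2.
have G_open i : setT i -> open (G i).
  by move=> _; apply: bigcup_open => t _; exact: cylinder_open.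
have G_cover : cube `<=` \bigcup_(i in setT) G i.
  move=> f f_cube; have f01 n : 0 <= f n <= 1 by have := f_cube n; rewrite /= in_itv.
  pose x : hilbert_cube R := exist _ f f01.
  have [i Fix] := F_cover x; have [e [e_gt0 ball_e]] := F_open i x Fix.
  have [N wN] := natSinv_lt_exists (divr_gt0 e_gt0 (ltr0n R 2)).
  exists i => //; exists (x, (N, e / 2)); last by move=> n _ /=; rewrite subrr normr0; lra.
  split=> [/=|y close]; first lra.
  apply: ball_e; apply: le_lt_trans (_ : e / 2 < e); last lra.
  by apply: cube_dist_le_cylinder (ltW wN) _ => n /close; rewrite distrC => /ltW.
have [D _ D_cover] := cube_compact _ _ _ G_open G_cover.
exists (size (finmap.enum_fset D)), (tnth (in_tuple (finmap.enum_fset D))) => y.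
have /D_cover [i /seq_tnthP [k ->] [t [_ Fy] yt]] : cube (sval y).
  by move=> n; rewrite /= in_itv; exact: (svalP y n).
by exists k; apply: Fy => n /yt.
Qed.

End HilbertCubeCompact.

(** * Separable metric spaces embed into the Hilbert cube *)

Section SeparableEmbedding.
Variables (R : realType) (T : Type) (d : T -> T -> R).

Lemma dense_seq_of_codes (C : countType) (code : nat -> T -> C) (eps : nat -> R) :
  (forall m x y, code m x = code m y -> d x y <= eps m) ->
  (forall e, 0 < e -> exists m, eps m < e) ->
  exists z : nat -> option T, forall x e, 0 < e -> exists n y, z n = Some y /\ d x y < e.
Proof.
move=> code_close eps_small.
pose rep (c : nat * C) : option T :=
  if pselect (exists x, code c.1 x = c.2) is left ex then Some (proj1_sig (cid ex)) else None.
exists (fun n => obind rep (unpickle n)) => x e e_gt0.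
have [m eps_m] := eps_small e e_gt0.
exists (pickle (m, code m x)); rewrite pickleK /= /rep /=.
case: pselect => [ex|[]]; last by exists x.
exists (proj1_sig (cid ex)); split => //; apply: le_lt_trans eps_m.
by apply: code_close; rewrite (proj2_sig (cid ex)).
Qed.

Hypotheses (d_ge0 : forall x y, 0 <= d x y) (d_sym : forall x y, d x y = d y x).
Hypothesis d_triangle : forall x y z, d x z <= d x y + d y z.
Hypothesis d_eq0 : forall x y, d x y = 0 -> x = y.
Variable z : nat -> option T.
Hypothesis z_dense : forall x e, 0 < e -> exists n y, z n = Some y /\ d x y < e.

Definition cube_coord x n : R := if z n is Some y then Num.min (d x y) 1 else 0.

Lemma cube_coord01 x n : 0 <= cube_coord x n <= 1.
Proof.
rewrite /cube_coord; case: (z n) => [y|]; last by rewrite lexx ler01.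
by rewrite le_min d_ge0 ler01 ge_min lexx orbT.
Qed.

Definition cube_embedding x : hilbert_cube R := exist _ (cube_coord x) (cube_coord01 x).

Definition embedding_dist x y : R := cube_metric (cube_embedding x) (cube_embedding y).

Lemma cube_coord_lipschitz x y n : `|cube_coord x n - cube_coord y n| <= d x y.
Proof.
rewrite /cube_coord; case: (z n) => [w|]; last by rewrite subrr normr0.
apply: le_trans (dist_minr_le _ _ _) _; rewrite ler_norml.
by have := d_triangle x y w; have := d_triangle y x w; rewrite (d_sym y x); lra.
Qed.

Lemma embedding_dist_le x y : embedding_dist x y <= d x y.
Proof.
apply: cube_dist_le => n; apply: le_trans (cube_coord_lipschitz x y n).
by rewrite ge_min lexx.
Qed.

Lemma d_lt_of_embedding_dist x e : 0 < e ->
  exists2 r, 0 < r & forall y, embedding_dist x y < r -> d x y < e.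
Proof.
move=> e_gt0; pose e1 := Num.min e 1.
have e1_gt0 : 0 < e1 by rewrite lt_min e_gt0 ltr01.
have [e1e e11] : e1 <= e /\ e1 <= 1 by rewrite !ge_min !lexx orbT.
have [n [w [zn xw]]] := z_dense x (divr_gt0 e1_gt0 (ltr0n R 4)).
exists (Num.min (e1 / 4) n.+1%:R^-1); first by rewrite lt_min natSinv_gt0 divr_gt0.
move=> y xy; have := le_lt_trans (cube_term_le_dist _ _ n) xy; rewrite /cube_term /=.
set A := `|_ - _|; have [_ A_lt|_] := lerP A n.+1%:R^-1; last first.
  by rewrite lt_min ltxx andbF.
have {A_lt} A_lt : A < e1 / 4 by apply: lt_le_trans A_lt _; rewrite ge_min lexx.
have dyw : d y w < e1 / 2.
  move: A_lt; rewrite /A /cube_coord zn; have [_|xw1] := lerP (d x w) 1; last lra.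
  by have [_|yw1] := lerP (d y w) 1; rewrite ltr_norml => /andP[? ?]; lra.
by have := d_triangle x w y; rewrite (d_sym w y); lra.
Qed.

Lemma embedding_dist_is_metric : is_metric embedding_dist.
Proof.
have [ge0 [eq0 [sym tri]]] := @cube_metric_is_metric R.
split; first by move=> x y; exact: ge0.
split; last by split=> [x y|x y w]; [exact: sym|exact: tri].
move=> x y; split=> [xy0|->]; last exact/eq0.
apply/d_eq0/le_anti; rewrite d_ge0 andbT; apply/ler_addgt0Pr => e e_gt0.
have [r r_gt0 /(_ y)] := d_lt_of_embedding_dist x e_gt0.
by rewrite add0r xy0 => /(_ r_gt0) /ltW.
Qed.

Lemma d_open_embedding_dist (U : set T) : d_open d U <-> d_open embedding_dist U.
Proof.
split=> U_open x Ux; have [e [e_gt0 ball_e]] := U_open x Ux.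
  have [r r_gt0 close] := d_lt_of_embedding_dist x e_gt0.
  by exists r; split => // y /close /ball_e.
by exists e; split => // y /(le_lt_trans (embedding_dist_le x y)) /ball_e.
Qed.

End SeparableEmbedding.

(** * Interval partitions *)

Section BlockOrder.
Variable R : realType.
Implicit Types (U V W : R * R) (l : seq (R * R)).

Definition proper_block U : bool := U.1 < U.2.

Lemma block_lt_trans : {in proper_block & &, transitive (@block_lt R)}.
Proof. by move=> V U W; rewrite /block_lt /in_mem /= /proper_block; lra. Qed.

Lemma block_lt_irrefl U : proper_block U -> ~~ block_lt U U.
Proof. by rewrite /proper_block /block_lt -ltNge. Qed.

Lemma sorted_block_lt_pairwise l :
  all proper_block l -> sorted (@block_lt R) l = pairwise (@block_lt R) l.
Proof. by move=> l_proper; rewrite (sorted_pairwise_in (@block_lt_trans)). Qed.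

Lemma pairwise_block_lt_uniq l :
  all proper_block l -> pairwise (@block_lt R) l -> uniq l.
Proof.
move=> proper_l lt_l; rewrite uniq_pairwise.
apply: sub_in_pairwise proper_l lt_l => U V U_proper _ UV.
by apply: contraTneq UV => <-; exact: block_lt_irrefl.
Qed.

Lemma sum_Leb_pairwise_le l m M :
  (forall U, U \in l -> m <= U.1 /\ U.1 < U.2 /\ U.2 <= M) ->
  pairwise (@block_lt R) l -> m <= M -> \sum_(U <- l) Leb U <= M - m.
Proof.
elim: l m => [|U l IHl] m l_in; first by rewrite big_nil subr_ge0.
rewrite pairwise_cons big_cons => /andP[/allP U_lt lt_l] mM.
have [mU1 [U12 U2M]] := l_in U (mem_head _ _).
suff : \sum_(V <- l) Leb V <= M - U.2 by rewrite /Leb; lra.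
apply: IHl lt_l U2M => V Vl.
have /l_in [_ [V12 V2M]] : V \in U :: l by rewrite in_cons Vl orbT.
by have := U_lt V Vl; rewrite /block_lt.
Qed.

End BlockOrder.

Section IntervalPartition.
Variables (R : realType) (B : set (R * R)) (L : R).
Hypothesis B_part : is_interval_partition B L.
Implicit Types (U V : R * R) (l : seq (R * R)).
Local Notation mu := (@lebesgue_measure R).

Lemma ip_len_ge0 : 0 <= L.
Proof. by case: B_part. Qed.

Lemma ip_block_bounds U : B U -> 0 <= U.1 /\ U.1 < U.2 /\ U.2 <= L.
Proof. by case: B_part => _ [+ _] => /[apply]. Qed.

Lemma ip_trivIset : trivIset B block_set.
Proof.
move=> U V BU BV [x UVx]; apply: contrapT => UV.
by case: B_part => _ [_ [/(_ U V BU BV UV) UV0 _]]; rewrite UV0 in UVx.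
Qed.

Lemma ip_blocks_separated U V : B U -> B V -> U <> V ->
  U.2 <= V.1 \/ V.2 <= U.1.
Proof.
move=> BU BV UV; have [_ [U12 _]] := ip_block_bounds BU.
have [_ [V12 _]] := ip_block_bounds BV.
have meet x : U.1 < x < U.2 -> V.1 < x < V.2 -> False.
  by move=> Ux Vx; apply/UV/ip_trivIset => //; exists x; split; rewrite /block_set /= in_itv.
case: (leP U.2 V.1) => [|VU2]; first by left.
case: (leP V.2 U.1) => [|UV2]; first by right.
case: (leP U.1 V.1) => ?; case: (leP U.2 V.2) => ?.
- by case: (meet ((V.1 + U.2) / 2)); apply/andP; split; lra.
- by case: (meet ((V.1 + V.2) / 2)); apply/andP; split; lra.
- by case: (meet ((U.1 + U.2) / 2)); apply/andP; split; lra.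
- by case: (meet ((U.1 + V.2) / 2)); apply/andP; split; lra.
Qed.

Lemma ip_sort_pairwise l : uniq l -> (forall U, U \in l -> B U) ->
  pairwise (@block_lt R) (sort (fun U V => U.1 <= V.1) l).
Proof.
move=> l_uniq l_B; set le1 := fun U V : R * R => U.1 <= V.1.
have le1_pairwise : pairwise le1 (sort le1 l).
  rewrite -sorted_pairwise; last by move=> V U W; exact: le_trans.
  by apply: sort_sorted => U V; exact: le_total.
have neq_pairwise : pairwise (fun U V => U != V) (sort le1 l).
  by rewrite -uniq_pairwise sort_uniq.
have : pairwise [rel U V | le1 U V && (U != V)] (sort le1 l).
  by rewrite pairwise_relI le1_pairwise neq_pairwise.
apply: (sub_in_pairwise (P := mem l)); last by apply/allP => U; rewrite mem_sort.
move=> U V /l_B BU /l_B BV /andP[UV1 /eqP UV].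
have [_ [U12 _]] := ip_block_bounds BU; have [_ [V12 _]] := ip_block_bounds BV.
by case: (ip_blocks_separated BU BV UV); rewrite /block_lt /le1 in UV1 *; lra.
Qed.

Lemma ip_sum_Leb_split l1 U l2 : pairwise (@block_lt R) (l1 ++ U :: l2) ->
  (forall V, V \in l1 ++ U :: l2 -> B V) ->
  \sum_(V <- l1) Leb V <= U.1 /\ \sum_(V <- U :: l2) Leb V <= L - U.1.
Proof.
rewrite pairwise_cat => /and3P[/allrelP l1_lt l1_pw Ul2_pw] l_B.
have bounds V : V \in l1 ++ U :: l2 -> 0 <= V.1 /\ V.1 < V.2 /\ V.2 <= L.
  by move=> /l_B /ip_block_bounds.
have /bounds [U0 [U12 U2L]] : U \in l1 ++ U :: l2 by rewrite mem_cat mem_head orbT.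
split; first rewrite -[U.1]subr0.
  apply: sum_Leb_pairwise_le l1_pw U0 => V Vl1.
  have /bounds [V0 [V12 _]] : V \in l1 ++ U :: l2 by rewrite mem_cat Vl1.
  by do !split => //; exact: (l1_lt V U Vl1 (mem_head _ _)).
have U_lt : {in l2, forall V, block_lt U V}.
  by move: Ul2_pw; rewrite pairwise_cons => /andP[/allP].
apply: sum_Leb_pairwise_le Ul2_pw (ltW (lt_le_trans U12 U2L)) => V.
rewrite in_cons => /orP[/eqP ->|Vl2]; first by split; [exact: lexx|split].
have /bounds [_ [V12 V2L]] : V \in l1 ++ U :: l2 by rewrite mem_cat in_cons Vl2 !orbT.
by have := U_lt V Vl2; rewrite /block_lt => UV; do !split => //; lra.
Qed.

Lemma ip_measure_range : mu `[0, L] = L%:E.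
Proof.
rewrite lebesgue_measure_itv /= lte_fin sube0.
by case: ltgtP ip_len_ge0 => // <-.
Qed.

Lemma ip_measure_blocks (D : set (R * R)) : finite_set D -> D `<=` B ->
  mu (\bigcup_(U in D) block_set U) = (\sum_(U \in D) (Leb U)%:E)%E.
Proof.
move=> D_fin DB; rewrite measure_fin_bigcup //; last first.
- by move=> U _; exact: measurable_itv.
- by apply: sub_trivIset DB ip_trivIset.
apply: eq_fsbigr => U /[!inE] /DB /ip_block_bounds [_ [U12 _]].
have := lebesgue_measure_itv `]U.1, U.2[; rewrite /= lte_fin U12 -EFinB; exact.
Qed.

Lemma ip_sum_Leb_le l : uniq l -> (forall U, U \in l -> B U) ->
  \sum_(U <- l) Leb U <= L.
Proof.
move=> l_uniq l_B; rewrite -lee_fin -sumEFin fsbig_seq //.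
rewrite -ip_measure_blocks -?ip_measure_range; [|exact: finite_seq|by move=> U /l_B].
apply: le_measure; rewrite ?inE; [|exact: measurable_itv|].
  by apply: fin_bigcup_measurable => [|U _]; [exact: finite_seq|exact: measurable_itv].
move=> x [U /l_B /ip_block_bounds [U0 [_ U2L]]].
by rewrite /block_set /= !in_itv /= => /andP[? ?]; apply/andP; split; lra.
Qed.

Lemma ip_long_blocks_finite c : 0 < c -> finite_set [set U | B U /\ c < Leb U].
Proof.
move=> c_gt0; apply: contrapT => /(infinite_set_fset (Num.Def.archi_bound (L / c))).
case=> D D_long; set l := finmap.enum_fset D => l_size.
have l_long U : U \in l -> B U /\ c < Leb U by move=> Ul; exact: D_long.
have sum_ge : c * (size l)%:R <= \sum_(U <- l) Leb U.
  rewrite -sum1_size natr_sum mulr_sumr.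
  by rewrite !big_seq; apply: ler_sum => U /l_long [_ /ltW]; rewrite mulr1.
have := ip_sum_Leb_le (finmap.fset_uniq D) (fun U Ul => (l_long U Ul).1).
have := archi_boundP (divr_ge0 ip_len_ge0 (ltW c_gt0)).
rewrite ltr_pdivrMr // => /lt_le_trans/(_ (_ : _ <= c * (size l)%:R)).
by rewrite mulrC ler_pM2l // ler_nat; move=> /(_ l_size); lra.
Qed.

Lemma ip_len_le_measure (E : set R) : measurable E ->
  \bigcup_(U in B) block_set U `<=` E -> (L%:E <= mu E)%E.
Proof.
move=> E_meas BE; case: B_part => _ [_ [_ [N [N_meas N0 N_sub]]]].
rewrite -ip_measure_range; apply: (@le_trans _ _ (mu (E `|` N))).
  apply: le_measure; rewrite ?inE; [exact: measurable_itv|exact: measurableU|].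
  move=> x x0L; have [x_blocks|x_gap] := pselect ((\bigcup_(U in B) block_set U) x).
    by left; exact: BE.
  by right; apply: N_sub.
have muN : mu N = 0 by exact: N0.
apply: (@le_trans _ _ (mu E + mu N)%E); first exact: measureU2.
by rewrite muN adde0.
Qed.

Lemma ip_exhaust e : 0 < e -> exists l, pairwise (@block_lt R) l /\
  (forall U, U \in l -> B U) /\ L - \sum_(U <- l) Leb U < e.
Proof.
move=> e_gt0; pose A k := [set U | B U /\ k.+1%:R^-1 < Leb U].
have A_fin k : finite_set (A k) by apply: ip_long_blocks_finite.
have A_B k : A k `<=` B by move=> U [].
pose F k := \bigcup_(U in A k) block_set U.
suff [k muF] : exists k, ((L - e)%:E < mu (F k))%E.
  rewrite ip_measure_blocks // fsbig_finite // sumEFin lte_fin in muF.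
  set l := finmap.enum_fset _ in muF.
  have l_B U : U \in l -> B U by rewrite in_fset_set // inE => -[].
  have l_uniq : uniq l := finmap.fset_uniq _.
  exists (sort (fun U V => U.1 <= V.1) l); split; first exact: ip_sort_pairwise.
  split; first by move=> U; rewrite mem_sort; exact: l_B.
  by rewrite (perm_big l) ?perm_sort //; lra.
apply: contrapT => /forallNP F_small.
have F_meas k : measurable (F k).
  by apply: fin_bigcup_measurable => // U _; exact: measurable_itv.
have F_mono : {homo F : n m / (n <= m)%N >-> (n <= m)%O}.
  move=> n m nm; apply/subsetPset => x [U [BU U_long] Ux]; exists U => //.
  split => //; apply: le_lt_trans U_long.
  by rewrite lef_pV2 ?posrE ?ler_nat.
have cvgF := @nondecreasing_cvg_mu _ _ _ mu _ F_meas (bigcupT_measurable F F_meas) F_mono.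
have L_le_lim : (L%:E <= limn (mu \o F))%E.
  rewrite (cvg_lim _ cvgF) //; apply: ip_len_le_measure (bigcupT_measurable F F_meas) _.
  move=> x [U BU Ux]; have [_ [U12 _]] := ip_block_bounds BU.
  have [k Uk] : exists k : nat, k.+1%:R^-1 < Leb U.
    by apply: natSinv_lt_exists; rewrite /Leb subr_gt0.
  by exists k => //; exists U.
have lim_le : (limn (mu \o F) <= (L - e)%:E)%E.
  apply: lime_le; first by apply/cvg_ex; eexists; exact: cvgF.
  by apply: nearW => k; rewrite leNgt; apply/negP/F_small.
by have := le_trans L_le_lim lim_le; rewrite lee_fin; lra.
Qed.

End IntervalPartition.

(** * The metric d_alpha *)

Section Correspondences.
Variables (R : realType) (alpha : R).
Local Notation T := (Ialpha alpha).
Local Notation pairs := (seq ((R * R) * (R * R))).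
Implicit Types (b g h : T) (s : pairs) (U V W : R * R).

Lemma Ialpha_partition b : is_interval_partition (blocks b) (IPlen b).
Proof. exact: (proj2_sig b).1. Qed.

Lemma Ialpha_eq b g : blocks b = blocks g -> IPlen b = IPlen g -> b = g.
Proof.
rewrite /blocks /IPlen; case: b g => [[Bb Lb] ?] [[Bg Lg] ?] /= eB eL.
by apply: eq_exist; rewrite eB eL.
Qed.

Definition mismatch s := \sum_(p <- s) `|Leb p.1 - Leb p.2|.
Definition defect (L : R) s := mismatch s + L - \sum_(p <- s) Leb p.1.
Definition div_gap b g s := \big[Num.max/0]_(p <- s) `|DivU b p.1 - DivU g p.2|.
Definition swap_corr s : pairs := [seq (p.2, p.1) | p <- s].

Lemma mismatch_ge0 s : 0 <= mismatch s.
Proof. exact: sumr_ge0. Qed.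

Lemma swap_corrK : involutive swap_corr.
Proof. by elim=> //= -[U V] s ->. Qed.

Lemma map_fst_swap s : map fst (swap_corr s) = map snd s.
Proof. by rewrite -map_comp. Qed.

Lemma map_snd_swap s : map snd (swap_corr s) = map fst s.
Proof. by rewrite -map_comp. Qed.

Lemma dist_sum_Leb_le_mismatch s :
  `|\sum_(p <- s) Leb p.1 - \sum_(p <- s) Leb p.2| <= mismatch s.
Proof. by rewrite -sumrB; exact: ler_norm_sum. Qed.

Lemma mem_swap s x : (x \in swap_corr s) = ((x.2, x.1) \in s).
Proof.
apply/mapP/idP => [[p ps ->] //|xs]; first by rewrite -surjective_pairing.
by exists (x.2, x.1); rewrite //= -surjective_pairing.
Qed.

Lemma defect_perm L s s' : perm_eq s s' -> defect L s = defect L s'.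
Proof. by move=> ss'; rewrite /defect /mismatch !(perm_big _ ss'). Qed.

Lemma mismatch_swap s : mismatch (swap_corr s) = mismatch s.
Proof. by rewrite /mismatch big_map; apply: eq_bigr => p _; rewrite distrC. Qed.

Lemma sum_Leb_fst_swap s : \sum_(p <- swap_corr s) Leb p.1 = \sum_(p <- s) Leb p.2.
Proof. by rewrite big_map. Qed.

Lemma div_gap_swap b g s : div_gap g b (swap_corr s) = div_gap b g s.
Proof. by rewrite /div_gap big_map; apply: eq_bigr => p _; rewrite distrC. Qed.

Lemma distortionE b g s : distortion b g s =
  Num.max (Num.max (defect (IPlen b) s) (defect (IPlen g) (swap_corr s)))
          (Num.max (div_gap b g s) `|Divinf b - Divinf g|).
Proof. by rewrite /defect mismatch_swap big_map. Qed.

Lemma distortion_le b g s e : distortion b g s <= e <->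
  [/\ defect (IPlen b) s <= e, defect (IPlen g) (swap_corr s) <= e,
      div_gap b g s <= e & `|Divinf b - Divinf g| <= e].
Proof.
rewrite distortionE !ge_max; split; first by move=> /andP[/andP[-> ->] /andP[-> ->]].
by case=> -> -> -> ->.
Qed.

Lemma distortion_swap b g s : distortion g b (swap_corr s) = distortion b g s.
Proof.
by rewrite !distortionE swap_corrK div_gap_swap distrC (maxC (defect (IPlen g) _)).
Qed.

Lemma is_correspondence_swap b g s :
  is_correspondence b g s -> is_correspondence g b (swap_corr s).
Proof.
case=> s_blocks s_sorted; split; last by rewrite map_fst_swap map_snd_swap; case: s_sorted.
by move=> q /mapP[p /s_blocks [? ?] ->].
Qed.

Section OneCorrespondence.
Variables (b g : T) (s : pairs).
Hypothesis s_corr : is_correspondence b g s.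

Lemma corr_proper_fst : all (@proper_block R) (map fst s).
Proof.
apply/allP => U /mapP[p /(proj1 s_corr) [bp _] ->].
by have [_ [? _]] := ip_block_bounds (Ialpha_partition b) bp.
Qed.

Lemma corr_pairwise_fst : pairwise (@block_lt R) (map fst s).
Proof. by rewrite -sorted_block_lt_pairwise ?corr_proper_fst //; case: s_corr => _ []. Qed.

Lemma corr_uniq_fst : uniq (map fst s).
Proof. exact: pairwise_block_lt_uniq corr_proper_fst corr_pairwise_fst. Qed.

Lemma corr_sum_fst_le : \sum_(p <- s) Leb p.1 <= IPlen b.
Proof.
rewrite -(big_map fst xpredT); apply: (ip_sum_Leb_le (Ialpha_partition b) corr_uniq_fst).
by move=> U /mapP[p /(proj1 s_corr) [? _] ->].
Qed.

Lemma defect_ge0 : 0 <= defect (IPlen b) s.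
Proof. by have := mismatch_ge0 s; have := corr_sum_fst_le; rewrite /defect; lra. Qed.

End OneCorrespondence.

Lemma corr_pairwise_snd b g s :
  is_correspondence b g s -> pairwise (@block_lt R) (map snd s).
Proof. by move=> /is_correspondence_swap/corr_pairwise_fst; rewrite map_fst_swap. Qed.

Lemma corr_uniq_snd b g s : is_correspondence b g s -> uniq (map snd s).
Proof. by move=> /is_correspondence_swap/corr_uniq_fst; rewrite map_fst_swap. Qed.

Lemma distortion_ge0 b g s : is_correspondence b g s -> 0 <= distortion b g s.
Proof. by move=> /defect_ge0; rewrite distortionE !le_max => ->. Qed.

Lemma d_alpha_le b g s : is_correspondence b g s -> d_alpha b g <= distortion b g s.
Proof.
move=> s_corr; apply: ge_inf; last by exists s.
by exists 0 => _ [s' [/distortion_ge0 ? ->]].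
Qed.

Lemma d_alpha_ge b g x :
  (forall s, is_correspondence b g s -> x <= distortion b g s) -> x <= d_alpha b g.
Proof.
move=> x_le; apply: lb_le_inf; last by move=> _ [s [/x_le ? ->]].
by exists (distortion b g [::]), [::].
Qed.

Lemma d_alpha_ge0 b g : 0 <= d_alpha b g.
Proof. by apply: d_alpha_ge => s /distortion_ge0. Qed.

Lemma d_alpha_lt b g e : d_alpha b g < e ->
  exists2 s, is_correspondence b g s & distortion b g s < e.
Proof.
have nonempty : [set x | exists s, is_correspondence b g s /\ x = distortion b g s] !=set0.
  by exists (distortion b g [::]), [::].
by move=> /(inf_lt nonempty) [_ [s [s_corr ->]] ?]; exists s.
Qed.

Lemma d_alpha_sym b g : d_alpha b g = d_alpha g b.
Proof.
rewrite /d_alpha; congr inf; apply/seteqP; split => _ [s [s_corr ->]];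
  exists (swap_corr s); split; rewrite ?distortion_swap //; exact: is_correspondence_swap.
Qed.

End Correspondences.

Section Composition.
Variables (R : realType) (alpha : R).
Local Notation T := (Ialpha alpha).
Local Notation pairs := (seq ((R * R) * (R * R))).
Implicit Types (b g h : T) (s : pairs) (U V W : R * R).

Lemma pairwise_snd_mono s V W V' W' :
  all (@proper_block R) (map fst s) ->
  pairwise (@block_lt R) (map fst s) -> pairwise (@block_lt R) (map snd s) ->
  (V, W) \in s -> (V', W') \in s -> block_lt V V' -> block_lt W W'.
Proof.
elim: s => //= -[P Q] s IHs /andP[P_proper s_proper] /andP[/allP P_fst s_fst].
move=> /andP[/allP Q_snd s_snd]; rewrite !in_cons !xpair_eqE.
case/orP => [/andP[/eqP-> /eqP->]|VWs]; case/orP => [/andP[/eqP-> /eqP->]|VW's].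
- by rewrite (negbTE (block_lt_irrefl P_proper)).
- by move=> _; apply: Q_snd; exact: (map_f snd VW's).
- move: P_proper (P_fst V (map_f fst VWs)) (allP s_proper V (map_f fst VWs)).
  by rewrite /proper_block /block_lt /= => *; exfalso; lra.
- exact: IHs.
Qed.

Definition partner s V : option (R * R) := ohead [seq p.2 | p <- s & p.1 == V].

Lemma partner_mem s V W : partner s V = Some W -> (V, W) \in s.
Proof.
rewrite /partner; case E: [seq _ | _ <- _ & _] => [|W' ws] //= [<-].
have /mapP[p] : W' \in [seq p.2 | p <- s & p.1 == V] by rewrite E mem_head.
by rewrite mem_filter => /andP[/eqP <- ps] ->; rewrite -surjective_pairing.
Qed.

Lemma partner_uniq s V W : uniq (map fst s) -> (V, W) \in s -> partner s V = Some W.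
Proof.
elim: s => //= p s IHs /andP[p_new s_uniq]; rewrite in_cons.
case/orP => [/eqP <-|VWs]; first by rewrite /partner /= eqxx.
have pV : p.1 != V by apply: contraNneq p_new => ->; exact: (map_f fst VWs).
by rewrite /partner /= (negbTE pV); exact: IHs.
Qed.

Definition composable s2 (p : (R * R) * (R * R)) : bool := partner s2 p.2 != None.
(* The default [p.2] only occurs on pairs that are not composable, which [compose] drops. *)
Definition link s2 (p : (R * R) * (R * R)) : R * R := odflt p.2 (partner s2 p.2).
Definition compose s1 s2 : pairs := [seq (p.1, link s2 p) | p <- s1 & composable s2 p].

Lemma link_mem s2 p : composable s2 p -> (p.2, link s2 p) \in s2.
Proof. by rewrite /composable /link; case E: partner => [W|] //= _; exact: partner_mem. Qed.

Lemma big_compose (F : (R * R) * (R * R) -> R) s1 s2 :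
  \sum_(x <- compose s1 s2) F x = \sum_(p <- s1 | composable s2 p) F (p.1, link s2 p).
Proof. by rewrite big_map big_filter. Qed.

Lemma mem_compose s1 s2 x : uniq (map fst s2) ->
  reflect (exists V, (x.1, V) \in s1 /\ (V, x.2) \in s2) (x \in compose s1 s2).
Proof.
move=> s2_uniq; apply: (iffP mapP) => [[p] | [V [xV Vx]]].
  rewrite mem_filter => /andP[p_comp ps] -> /=; exists p.2.
  by rewrite -surjective_pairing; split => //; exact: link_mem.
have pV := partner_uniq s2_uniq Vx.
exists (x.1, V); first by rewrite mem_filter xV /composable /= pV.
by rewrite /link /= pV -surjective_pairing.
Qed.

Lemma uniq_compose s1 s2 : uniq (map fst s1) -> uniq (map fst (compose s1 s2)).
Proof. by rewrite -map_comp; apply: subseq_uniq; rewrite map_subseq ?filter_subseq. Qed.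

Lemma compose_swap s1 s2 :
  uniq (map fst s1) -> uniq (map snd s1) -> uniq (map fst s2) -> uniq (map snd s2) ->
  perm_eq (swap_corr (compose s1 s2)) (compose (swap_corr s2) (swap_corr s1)).
Proof.
move=> s1_fst s1_snd s2_fst s2_snd.
apply: uniq_perm => [||x].
- by apply: (@map_uniq _ _ snd); rewrite map_snd_swap; exact: uniq_compose.
- by apply: (@map_uniq _ _ fst); apply: uniq_compose; rewrite map_fst_swap.
have s1'_fst : uniq (map fst (swap_corr s1)) by rewrite map_fst_swap.
rewrite mem_swap; apply/(mem_compose _ _ s2_fst)/(mem_compose _ _ s1'_fst).
  by case=> V [xV Vx]; exists V; rewrite !mem_swap.
by case=> V; rewrite !mem_swap => -[Vx xV]; exists V.
Qed.

Lemma div_gap_compose_le b g h s1 s2 : uniq (map fst s2) ->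
  div_gap b h (compose s1 s2) <= div_gap b g s1 + div_gap g h s2.
Proof.
move=> s2_uniq; rewrite /div_gap big_seq.
apply: bigmax_le => [|x]; first by rewrite addr_ge0 ?bigmax_ge_id.
case/(mem_compose _ _ s2_uniq) => V [xV Vx].
apply: le_trans (ler_distD (DivU g V) _ _) _; apply: lerD.
  exact: (le_bigmax_seq _ _ xpredT (fun p => `|DivU b p.1 - DivU g p.2|) xV).
exact: (le_bigmax_seq _ _ xpredT (fun p => `|DivU g p.1 - DivU h p.2|) Vx).
Qed.

Section TwoCorrespondences.
Variables (b g h : T) (s1 s2 : pairs).
Hypotheses (s1_corr : is_correspondence b g s1) (s2_corr : is_correspondence g h s2).

Lemma is_correspondence_compose : is_correspondence b h (compose s1 s2).
Proof.
split; [|split].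
- move=> x /mapP[p /[!mem_filter] /andP[p_comp ps] ->] /=; split.
    by have [] := proj1 s1_corr p ps.
  by have [] := proj1 s2_corr _ (link_mem p_comp).
- apply/pairwise_sorted; rewrite -map_comp.
  by apply: subseq_pairwise (corr_pairwise_fst s1_corr); rewrite map_subseq ?filter_subseq.
- apply/pairwise_sorted; rewrite -map_comp pairwise_map.
  have : pairwise (relpre snd (@block_lt R)) [seq p <- s1 | composable s2 p].
    rewrite -pairwise_map; apply: subseq_pairwise (corr_pairwise_snd s1_corr).
    by rewrite map_subseq ?filter_subseq.
  apply: (sub_in_pairwise (P := mem [seq p <- s1 | composable s2 p])); last by apply/allP.
  move=> p q /[!mem_filter] /andP[p_comp _] /andP[q_comp _] /=.
  apply: pairwise_snd_mono (link_mem p_comp) (link_mem q_comp).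
  + exact: corr_proper_fst s2_corr.
  + exact: corr_pairwise_fst s2_corr.
  + exact: corr_pairwise_snd s2_corr.
Qed.

Lemma mismatch_compose_le : mismatch (compose s1 s2) <=
  \sum_(p <- s1 | composable s2 p) `|Leb p.1 - Leb p.2| + mismatch s2.
Proof.
rewrite /mismatch big_compose; set c := composable s2.
apply: le_trans (_ : \sum_(p <- s1 | c p)
  (`|Leb p.1 - Leb p.2| + `|Leb p.2 - Leb (link s2 p)|) <= _).
  by apply: ler_sum => p _; exact: ler_distD.
rewrite big_split lerD2l /= -big_filter -(big_map (fun p => (p.2, link s2 p)) xpredT
  (fun q => `|Leb q.1 - Leb q.2|)).
apply: ler_sum_subset => [||q|q]; rewrite ?normr_ge0 //.
- apply: (@map_uniq _ _ fst); rewrite -map_comp.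
  by apply: subseq_uniq (corr_uniq_snd s1_corr); rewrite map_subseq ?filter_subseq.
- exact: map_uniq (corr_uniq_fst s2_corr).
- by case/mapP => p /[!mem_filter] /andP[p_comp _] ->; exact: link_mem.
Qed.

Lemma unmatched_snd_sum_le :
  \sum_(p <- s1 | ~~ composable s2 p) Leb p.2 + \sum_(q <- s2) Leb q.1 <= IPlen g.
Proof.
rewrite -big_filter -(big_map snd xpredT Leb) -(big_map fst xpredT Leb) -big_cat.
apply: (ip_sum_Leb_le (Ialpha_partition g)).
  rewrite cat_uniq (corr_uniq_fst s2_corr) andbT; apply/andP; split.
    by apply: subseq_uniq (corr_uniq_snd s1_corr); rewrite map_subseq ?filter_subseq.
  apply/hasPn => V /mapP[q qs ->]; apply/mapP => -[p /[!mem_filter] /andP[+ _] qp].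
  have qs' : (q.1, q.2) \in s2 by rewrite -surjective_pairing.
  by rewrite /composable -qp (partner_uniq (corr_uniq_fst s2_corr) qs').
move=> V /[!mem_cat] /orP[] /mapP[p].
  by rewrite mem_filter => /andP[_ /(proj1 s1_corr) [_ ?]] ->.
by move=> /(proj1 s2_corr) [? _] ->.
Qed.

Lemma defect_compose_le :
  defect (IPlen b) (compose s1 s2) <= defect (IPlen b) s1 + defect (IPlen g) s2.
Proof.
set c := composable s2.
have unmatched_le : \sum_(p <- s1 | ~~ c p) Leb p.1 <=
    \sum_(p <- s1 | ~~ c p) `|Leb p.1 - Leb p.2| + \sum_(p <- s1 | ~~ c p) Leb p.2.
  rewrite -big_split /=; apply: ler_sum => p _.
  by have := ler_norm (Leb p.1 - Leb p.2); lra.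
have split_sum (F : (R * R) * (R * R) -> R) :
    \sum_(p <- s1) F p = \sum_(p <- s1 | c p) F p + \sum_(p <- s1 | ~~ c p) F p.
  exact: bigID.
have := mismatch_compose_le; have := unmatched_snd_sum_le; have := mismatch_ge0 s2.
move: unmatched_le; rewrite /defect big_compose /mismatch -/c.
by rewrite (split_sum (fun p => `|Leb p.1 - Leb p.2|)) (split_sum (fun p => Leb p.1)); lra.
Qed.

End TwoCorrespondences.

Lemma distortion_compose_le b g h s1 s2 :
  is_correspondence b g s1 -> is_correspondence g h s2 ->
  distortion b h (compose s1 s2) <= distortion b g s1 + distortion g h s2.
Proof.
move=> s1_corr s2_corr.
have [b1 g1 D1 inf1] := proj1 (distortion_le b g s1 _) (lexx _).
have [g2 h2 D2 inf2] := proj1 (distortion_le g h s2 _) (lexx _).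
apply/distortion_le; split.
- by have := defect_compose_le s1_corr s2_corr; lra.
- rewrite (defect_perm _ (compose_swap (corr_uniq_fst s1_corr) (corr_uniq_snd s1_corr)
    (corr_uniq_fst s2_corr) (corr_uniq_snd s2_corr))).
  have := defect_compose_le (is_correspondence_swap s2_corr) (is_correspondence_swap s1_corr).
  lra.
- by have := div_gap_compose_le b g h s1 (corr_uniq_fst s2_corr); lra.
- by have := ler_distD (Divinf g) (Divinf b) (Divinf h); lra.
Qed.

Lemma d_alpha_triangle b g h : d_alpha b h <= d_alpha b g + d_alpha g h.
Proof.
apply/ler_addgt0Pr => e e_gt0.
have [s1 s1_corr D1] := @d_alpha_lt _ _ b g (d_alpha b g + e / 2) ltac:(lra).
have [s2 s2_corr D2] := @d_alpha_lt _ _ g h (d_alpha g h + e / 2) ltac:(lra).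
have := d_alpha_le (is_correspondence_compose s1_corr s2_corr).
have := distortion_compose_le s1_corr s2_corr; lra.
Qed.

End Composition.

Section Definiteness.
Variables (R : realType) (alpha : R).
Local Notation T := (Ialpha alpha).
Local Notation pairs := (seq ((R * R) * (R * R))).
Implicit Types (b g : T) (s : pairs) (U V : R * R).

Lemma IPlen_dist_le_distortion b g s :
  is_correspondence b g s -> `|IPlen b - IPlen g| <= distortion b g s.
Proof.
move=> s_corr; have [Db Dg _ _] := proj1 (distortion_le b g s _) (lexx _).
have Sg := corr_sum_fst_le (is_correspondence_swap s_corr).
have := corr_sum_fst_le s_corr; have := dist_sum_Leb_le_mismatch s; move: Db Dg Sg.
rewrite /defect mismatch_swap !big_map /= !ler_norml => Db Dg Sg /andP[? ?] Sb.
by apply/andP; split; lra.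
Qed.

Lemma IPlen_dist_le_d_alpha b g : `|IPlen b - IPlen g| <= d_alpha b g.
Proof. by apply: d_alpha_ge => s /IPlen_dist_le_distortion. Qed.

Lemma corr_long_block_mem b g s U : is_correspondence b g s -> blocks b U ->
  distortion b g s < Leb U -> U \in map fst s.
Proof.
move=> s_corr bU; apply: contraTT => U_new; rewrite -leNgt.
have [Db _ _ _] := proj1 (distortion_le b g s _) (lexx _).
have U_uniq : uniq (U :: map fst s) by rewrite /= U_new (corr_uniq_fst s_corr).
have U_blocks V : V \in U :: map fst s -> blocks b V.
  by rewrite in_cons => /orP[/eqP -> //|/mapP[p /(proj1 s_corr) [? _] ->]].
have := ip_sum_Leb_le (Ialpha_partition b) U_uniq U_blocks.
by rewrite big_cons big_map; move: Db; have := mismatch_ge0 s; rewrite /defect; lra.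
Qed.

Lemma corr_pair_close b g s U V : is_correspondence b g s -> (U, V) \in s ->
  `|U.1 - V.1| <= distortion b g s /\ `|Leb U - Leb V| <= distortion b g s.
Proof.
(* Cutting s at (U, V), the blocks listed before U fit into [0, U.1] and the others into
   [U.1, IPlen b], and likewise for V; the two defects bound the slack on both sides. *)
move=> s_corr UVs; case/splitPr: UVs s_corr => s1 s2 s_corr.
have [Db Dg _ _] := proj1 (distortion_le b g _ _) (lexx (distortion b g (s1 ++ (U, V) :: s2))).
have blocks_fst W : W \in map fst (s1 ++ (U, V) :: s2) -> blocks b W.
  by case/mapP => p /(proj1 s_corr) [? _] ->.
have blocks_snd W : W \in map snd (s1 ++ (U, V) :: s2) -> blocks g W.
  by case/mapP => p /(proj1 s_corr) [_ ?] ->.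
have pw_fst := corr_pairwise_fst s_corr; have pw_snd := corr_pairwise_snd s_corr.
rewrite map_cat /= in pw_fst blocks_fst; rewrite map_cat /= in pw_snd blocks_snd.
have [A1 A2] := ip_sum_Leb_split (Ialpha_partition b) pw_fst blocks_fst.
have [B1 B2] := ip_sum_Leb_split (Ialpha_partition g) pw_snd blocks_snd.
rewrite !big_map in A1 B1; rewrite !big_cons !big_map /= in A2 B2.
have := dist_sum_Leb_le_mismatch s1; have := mismatch_ge0 s1; have := mismatch_ge0 s2.
have := normr_ge0 (Leb U - Leb V).
move: Db Dg; rewrite /defect mismatch_swap /mismatch big_map !big_cat !big_cons /=.
rewrite /Leb /= in A1 A2 B1 B2 * => Db Dg uv m2 m1; rewrite ler_norml => /andP[c1 c2].
by split; [rewrite ler_norml; apply/andP; split|]; lra.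
Qed.

Lemma d_alpha_block_near b g U e : blocks b U -> d_alpha b g < e -> e <= Leb U ->
  exists2 V, blocks g V & `|U.1 - V.1| < e /\ `|Leb U - Leb V| < e.
Proof.
move=> bU bg_lt eU; have [s s_corr D_lt] := d_alpha_lt bg_lt.
have /mapP[[U' V] UVs /= UU'] := corr_long_block_mem s_corr bU (lt_le_trans D_lt eU).
rewrite -UU' in UVs; have [U1V1 ULV] := corr_pair_close s_corr UVs.
exists V; first by have [] := proj1 s_corr _ UVs.
by split; apply: le_lt_trans D_lt.
Qed.

Lemma d_alpha0_blocks b g U : d_alpha b g = 0 -> blocks b U -> blocks g U.
Proof.
move=> bg0 bU; have [_ [U12 _]] := ip_block_bounds (Ialpha_partition b) bU.
pose c := (U.1 + U.2) / 2.
(* Every block of g that is (Leb U / 4)-close to U contains the midpoint c of U, so all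
   such blocks coincide, and this block is arbitrarily close to U. *)
have close_block e : 0 < e -> e <= Leb U / 4 -> exists2 V, blocks g V &
    [/\ block_set V c, `|U.1 - V.1| < e & `|Leb U - Leb V| < e].
  move=> e_gt0 eU; have [V gV [U1V1 ULV]] : exists2 V, blocks g V &
      `|U.1 - V.1| < e /\ `|Leb U - Leb V| < e.
    by apply: d_alpha_block_near bU _ _; rewrite ?bg0 //; rewrite /Leb in eU *; lra.
  exists V => //; split => //; rewrite /block_set /= in_itv /=.
  move: U1V1 ULV eU; rewrite /Leb /c !ltr_norml => /andP[? ?] /andP[? ?] ?.
  by apply/andP; split; lra.
have quarter_gt0 : 0 < Leb U / 4 by rewrite /Leb; lra.
have [V0 gV0 [cV0 _ _]] := close_block _ quarter_gt0 (lexx _).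
have V0_near e : 0 < e -> e <= Leb U / 4 -> `|U.1 - V0.1| < e /\ `|Leb U - Leb V0| < e.
  move=> e_gt0 eU; have [V gV [cV U1V1 ULV]] := close_block e e_gt0 eU.
  suff <- : V = V0 by [].
  by apply: (ip_trivIset (Ialpha_partition g)) => //; exists c.
have U1 : U.1 = V0.1 by apply: (eq_dist_lt quarter_gt0) => e ? ?; case: (V0_near e).
have UL : Leb U = Leb V0 by apply: (eq_dist_lt quarter_gt0) => e ? ?; case: (V0_near e).
have U2 : U.2 = V0.2 by move: UL; rewrite /Leb U1; lra.
by rewrite (surjective_pairing U) U1 U2 -surjective_pairing.
Qed.

Lemma d_alpha_eq0 b g : d_alpha b g = 0 -> b = g.
Proof.
move=> bg0; apply: Ialpha_eq.
  apply/funext => U; apply/propext; split; first exact: d_alpha0_blocks.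
  by apply: d_alpha0_blocks; rewrite d_alpha_sym.
by have := IPlen_dist_le_d_alpha b g; rewrite bg0 normr_le0 subr_eq0 => /eqP.
Qed.

End Definiteness.

(** * Separability of d_alpha *)

Section Separability.
Variables (R : realType) (alpha : R).
Local Notation T := (Ialpha alpha).
Implicit Types (b g : T).

Definition exhaustion b (m : nat) : seq (R * R) :=
  proj1_sig (cid (ip_exhaust (Ialpha_partition b) (natSinv_gt0 R m))).

Lemma exhaustionP b m : [/\ pairwise (@block_lt R) (exhaustion b m),
  forall U, U \in exhaustion b m -> blocks b U &
  IPlen b - \sum_(U <- exhaustion b m) Leb U < m.+1%:R^-1].
Proof.
by have [? [? ?]] := proj2_sig (cid (ip_exhaust (Ialpha_partition b) (natSinv_gt0 R m))).
Qed.

Lemma zip_is_correspondence b g lb lg : size lb = size lg ->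
  pairwise (@block_lt R) lb -> (forall U, U \in lb -> blocks b U) ->
  pairwise (@block_lt R) lg -> (forall V, V \in lg -> blocks g V) ->
  is_correspondence b g (zip lb lg).
Proof.
move=> size_eq pw_b blocks_b pw_g blocks_g.
have s_fst : map fst (zip lb lg) = lb by apply: unzip1_zip; rewrite size_eq.
have s_snd : map snd (zip lb lg) = lg by apply: unzip2_zip; rewrite size_eq.
split; last by rewrite s_fst s_snd; split; exact: pairwise_sorted.
move=> p ps; split; [apply: blocks_b; rewrite -s_fst|apply: blocks_g; rewrite -s_snd].
  exact: map_f.
exact: map_f.
Qed.

(* Lengths are rounded at precision 1/((k+1)(m+1)) when k blocks are kept, so that the
   rounding errors of all kept blocks add up to at most 1/(m+1). *)
Definition partition_code (m : nat) b : seq (int * int) * int :=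
  let l := exhaustion b m in
  ([seq (Num.floor (Leb U * ((size l).+1 * m.+1)%:R), Num.floor (DivU b U * m.+1%:R)) | U <- l],
   Num.floor (Divinf b * m.+1%:R)).

Lemma partition_code_eq_d_alpha_le m b g :
  partition_code m b = partition_code m g -> d_alpha b g <= 2 * m.+1%:R^-1.
Proof.
case=> pairs_eq Divinf_eq.
have [pw_b blocks_b exh_b] := exhaustionP b m; have [pw_g blocks_g exh_g] := exhaustionP g m.
set k : R := m.+1%:R; have k_gt0 : 0 < k by rewrite ltr0n.
set lb := exhaustion b m in pairs_eq pw_b blocks_b exh_b *.
set lg := exhaustion g m in pairs_eq pw_g blocks_g exh_g *.
have size_eq : size lb = size lg by move/(congr1 size): pairs_eq; rewrite !size_map.
set s := zip lb lg.
have s_fst : map fst s = lb by apply: unzip1_zip; rewrite size_eq.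
have s_snd : map snd s = lg by apply: unzip2_zip; rewrite size_eq.
have s_corr : is_correspondence b g s by apply: zip_is_correspondence.
set n := size lb; have size_s : size s = n by rewrite size_zip -size_eq minnn.
have n_gt0 : (0 : R) < (n.+1 * m.+1)%:R by rewrite ltr0n.
have close p : p \in s -> `|Leb p.1 - Leb p.2| < (n.+1 * m.+1)%:R^-1 /\
    `|DivU b p.1 - DivU g p.2| < k^-1.
  move=> ps; have := pairs_eq; rewrite -s_fst -s_snd -!map_comp => /eq_in_map/(_ p ps) [].
  rewrite /= !size_map size_s -/k.
  by move=> /(floor_eq_dist_lt n_gt0) ? /(floor_eq_dist_lt k_gt0).
have mismatch_le : mismatch s <= k^-1.
  apply: le_trans (_ : \sum_(p <- s) (n.+1 * m.+1)%:R^-1 <= _).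
    by rewrite /mismatch !big_seq; apply: ler_sum => p /close [/ltW].
  rewrite big_const_seq count_predT size_s iter_addr_0 -[X in X <= _]mulr_natl.
  rewrite natrM invfM -/k mulrA ler_piMl ?invr_ge0 ?ler0n //.
  by rewrite ler_pdivrMr ?ltr0Sn // mul1r ler_nat.
set e := k^-1 in exh_b exh_g close mismatch_le Divinf_eq *.
have e_gt0 : 0 < e by rewrite invr_gt0.
apply: le_trans (d_alpha_le s_corr) _; apply/distortion_le; split.
- rewrite /defect -(big_map fst xpredT Leb) s_fst -addrA.
  by apply: le_trans (lerD mismatch_le (ltW exh_b)) _; lra.
- rewrite /defect mismatch_swap sum_Leb_fst_swap -(big_map snd xpredT Leb) s_snd -addrA.
  by apply: le_trans (lerD mismatch_le (ltW exh_g)) _; lra.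
- rewrite /div_gap big_seq; apply: bigmax_le => [|p /close [_ /ltW]]; first by lra.
  by move/le_trans; apply; lra.
- by have := floor_eq_dist_lt k_gt0 Divinf_eq; rewrite -/k -/e; lra.
Qed.

End Separability.

Unset Implicit Arguments.

Theorem corollary3p7 (R : realType) (alpha : R) (halpha : 0 < alpha < 1) :
  exists d' : Ialpha alpha -> Ialpha alpha -> R,
    is_metric d' /\
    (forall U : set (Ialpha alpha), d_open d_alpha U <-> d_open d' U) /\
    exists (K : Type) (rho : K -> K -> R) (f : Ialpha alpha -> K),
      is_metric rho /\ d_compact rho /\
      forall x y, rho (f x) (f y) = d' x y.
Proof.
have d_ge0 := @d_alpha_ge0 R alpha.
have [z z_dense] : exists z : nat -> option (Ialpha alpha),
    forall x e, 0 < e -> exists n y, z n = Some y /\ d_alpha x y < e.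
  apply: (dense_seq_of_codes (@partition_code_eq_d_alpha_le R alpha)) => e e_gt0.
  have [m m_lt] := natSinv_lt_exists (divr_gt0 e_gt0 (ltr0n R 2)).
  by exists m; rewrite mulrC -ltr_pdivlMr.
have d_sym := @d_alpha_sym R alpha; have d_tri := @d_alpha_triangle R alpha.
have d_eq0 := @d_alpha_eq0 R alpha.
exists (embedding_dist d_ge0 z); split.
  exact: (embedding_dist_is_metric d_ge0 d_sym d_tri d_eq0 z_dense).
split; first exact: (d_open_embedding_dist d_ge0 d_sym d_tri z_dense).
exists (hilbert_cube R), (@cube_metric R), (cube_embedding d_ge0 z).
by split; [exact: cube_metric_is_metric|split; [exact: hilbert_cube_compact|]].
Qed.
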